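(* Let $k\geq 2$ be an integer and let $G$ be a properly edge-coloured graph on $n$ vertices. If $\hom(C_{2k},G)>64^{2k}k^{3k}n\Delta(G)^k$, then $G$ contains a rainbow cycle of length $2k$.
   Context: $\hom(C_{2k},G)$ is the number of graph homomorphisms from the cycle $C_{2k}$ to $G$, i.e. tuples $(x_1,\dots,x_{2k})$ of vertices with $x_ix_{i+1}\in E(G)$ for all $i$ (indices mod $2k$). $\Delta(G)$ is the maximum degree. An edge-colouring is proper if edges sharing a vertex get different colours; a subgraph is rainbow if all its edges have distinct colours. *)

From mathcomp Require Import all_boot.
Set Implicit Arguments. Unset Strict Implicit. Unset Printing Implicit Defensive.

Definition simple_graph (T : finType) (e : rel T) : Prop :=
  irreflexive e /\ symmetric e.

Definition max_degree (T : finType) (e : rel T) : nat :=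
  \max_(x : T) #|[set y | e x y]|.

Definition hom_cycle (T : finType) (e : rel T) (m : nat) : nat :=
  #|[set f : {ffun 'I_m -> T} | [forall i : 'I_m, e (f i) (f (ordS i))]]|.

Definition proper_edge_colouring (T : finType) (e : rel T) (C : Type)
    (c : T -> T -> C) : Prop :=
  (forall x y, e x y -> c x y = c y x) /\
  (forall x y z, e x y -> e x z -> y <> z -> c x y <> c x z).

Definition has_rainbow_cycle (T : finType) (e : rel T) (C : Type)
    (c : T -> T -> C) (m : nat) : Prop :=
  exists f : 'I_m -> T,
    injective f /\ (forall i : 'I_m, e (f i) (f (ordS i))) /\
    injective (fun i : 'I_m => c (f i) (f (ordS i))).

From mathcomp Require Import all_boot.
From mathcomp Require Import zify.
From Stdlib Require Import Classical ClassicalEpsilon.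
Set Implicit Arguments. Unset Strict Implicit. Unset Printing Implicit Defensive.

(* Let W_m(x,y) be the number of walks of length m from x to y, so that
   hom(C_m, G) = sum_x W_m(x,x).  Suppose G has no rainbow 2k-cycle.  Then
   every closed 2k-walk repeats a vertex or a colour, and after a rotation it
   either (V) returns to its start after l steps, 0 < l < 2k, or (C) repeats
   the colour of its (k-1)-th edge among its next k edges.  Walks of type (V)
   at x number at most W_l(x,x) W_(2k-l)(x,x); walks of type (C) through z
   are counted by a weight h(z) which, by properness and Cauchy-Schwarz,
   satisfies h(z)^2 <= k Delta W_(2k-2)(z,z) W_2k(z,z).  By Cauchy-Schwarz
   again j |-> W_2j(x,x) is log-convex, which bounds 16k^2 W_l W_(2k-l) and
   8k h(z) by W_2k(x,x) plus an error of at most (64 k^3 Delta)^k at each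
   vertex.  Summing over vertices and averaging over the 2k rotations, the
   bad walks make up all of hom but at most half of hom plus
   n (64 k^3 Delta)^k, so hom <= n (64 k^3 Delta)^k, a contradiction. *)

Lemma cauchy_schwarz_nat (I : finType) (a b : I -> nat) :
  (\sum_i a i * b i) ^ 2 <= (\sum_i a i ^ 2) * (\sum_i b i ^ 2).
Proof.
rewrite -(@leq_pmul2l 2) //.
have -> : (\sum_i a i * b i) ^ 2 = \sum_i \sum_j (a i * b j) * (a j * b i).
  rewrite -mulnn big_distrl /=; apply: eq_bigr => i _; rewrite big_distrr /=.
  by apply: eq_bigr => j _; lia.
have -> : (\sum_i a i ^ 2) * (\sum_i b i ^ 2) = \sum_i \sum_j (a i * b j) ^ 2.
  rewrite big_distrl /=; apply: eq_bigr => i _; rewrite big_distrr /=.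
  by apply: eq_bigr => j _; lia.
apply: (@leq_trans (\sum_i \sum_j ((a i * b j) ^ 2 + (a j * b i) ^ 2))).
  rewrite big_distrr; apply: leq_sum => i _; rewrite big_distrr.
  by apply: leq_sum => j _; exact: nat_Cauchy.
rewrite (eq_bigr _ (fun i _ => big_split _ _ _ _ _)) big_split /=.
by rewrite [X in _ + X]exchange_big /=; lia.
Qed.

Section LogConvex.
Variables (s : nat -> nat) (K : nat).
Hypothesis s_pos : forall j, j <= K -> 0 < s j.
Hypothesis s_logconvex : forall j, j.+2 <= K -> s j.+1 ^ 2 <= s j * s j.+2.

Lemma logconvex_ratio i j : i <= j -> j.+1 <= K -> s i.+1 * s j <= s i * s j.+1.
Proof.
elim: j => [|j IH] hij hK.
  by move: hij; rewrite leqn0 => /eqP ->; rewrite mulnC.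
case: (ltngtP i j.+1) => [hlt|hgt|->]; last by rewrite mulnC.
  2: by rewrite ltnNge hij in hgt.
have ratio_ij := IH hlt (ltnW hK).
have step := s_logconvex hK.
have pj := s_pos (ltnW (ltnW hK)).
have pj1 := s_pos (ltnW hK).
rewrite -(@leq_pmul2r (s j * s j.+1)); last by rewrite muln_gt0 pj pj1.
have := leq_mul ratio_ij step.
rewrite -mulnn; nia.
Qed.

Lemma logconvex_balance a b : 1 <= a -> 1 <= b -> a + b = K ->
  s a * s b <= s 1 * s K.-1.
Proof.
wlog hab : a b / a <= b.
  move=> H ha hb hK; case: (leqP a b) => h; first exact: H.
  rewrite mulnC; apply: H => //; [exact: ltnW | by rewrite addnC].
elim: a b hab => [|a IH] b hab //.
case: a IH hab => [|a] IH hab _ hb hK; first by rewrite -hK add1n.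
apply: leq_trans (_ : s a.+1 * s b.+1 <= _).
  by apply: logconvex_ratio; lia.
by apply: IH; lia.
Qed.

(* If s_0 = 1 and the last ratio s_K / s_(K-1) is below Q, then all ratios
   are, and s_(K-1) <= Q^(K-1). *)
Lemma logconvex_growth Q : s 0 = 1 -> 1 <= K -> s K < Q * s K.-1 ->
  s K.-1 <= Q ^ K.-1.
Proof.
move=> s0 hK hQ.
suff bound_j : forall j, j <= K.-1 -> s j <= Q ^ j by exact: bound_j.
elim=> [|j IH] hj; first by rewrite s0.
have ratio_jK := @logconvex_ratio j K.-1 (ltnW hj).
rewrite prednK // in ratio_jK; have {}ratio_jK := ratio_jK (leqnn K).
have pK := s_pos (leq_pred K).
have pj : 0 < s j by apply: s_pos; lia.
have : s j.+1 * s K.-1 < Q * s j * s K.-1.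
  apply: leq_ltn_trans ratio_jK _.
  by rewrite [Q * s j]mulnC -mulnA ltn_pmul2l.
rewrite ltn_pmul2r // => hj1.
rewrite expnS; apply: leq_trans (ltnW hj1) _.
by rewrite leq_mul2l IH ?orbT // ltnW.
Qed.
End LogConvex.

Definition even_profile (g : nat -> nat) j := g (j + j).

(* Abstract closed-walk profile: g l plays the role of the number W_l(x,x)
   of closed walks of length l at a non-isolated vertex x. *)
Section ClosedWalkProfile.
Variables (g : nat -> nat) (K : nat).
Hypothesis g0 : g 0 = 1.
Hypothesis g1 : g 1 = 0.
Hypothesis g_cauchy : forall p q, g (p + q) ^ 2 <= g (p + p) * g (q + q).
Hypothesis g2_pos : 0 < g 2.

Local Notation s := (even_profile g).

Lemma even_profile_logconvex j : s j.+1 ^ 2 <= s j * s j.+2.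
Proof.
rewrite /even_profile (_ : j.+1 + j.+1 = j + j.+2); first exact: g_cauchy.
by rewrite addSn !addnS.
Qed.

Lemma even_profile_pos j : 0 < s j.
Proof.
suff both : 0 < s j /\ 0 < s j.+1 by case: both.
elim: j => [|i [IH1 IH2]]; first by rewrite /even_profile g0.
split => //.
have := even_profile_logconvex i.
have : 0 < s i.+1 ^ 2 by rewrite expn_gt0 IH2.
by move=> pos /(leq_trans pos); rewrite muln_gt0 => /andP [].
Qed.

Let balance a b : 1 <= a -> 1 <= b -> a + b = K -> s a * s b <= s 1 * s K.-1.
Proof.
exact: (logconvex_balance (fun j _ => even_profile_pos j)
                          (fun j _ => even_profile_logconvex j)).
Qed.

(* Splitting a closed 2K-walk at an interior return: for 0 < l < 2K,
   g l * g (2K - l) <= s_1 s_(K-1).  For odd l this uses Cauchy-Schwarz once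
   more to pass to even lengths. *)
Lemma split_profile_le l : 0 < l < K + K -> g l * g (K + K - l) <= s 1 * s K.-1.
Proof.
move=> /andP [hl1 hl2].
rewrite -(odd_double_half l) in hl1 hl2 *.
move: (l./2) hl1 hl2 => a.
case: (odd l) => /= hl1 hl2; last first.
  rewrite add0n -addnn in hl1 hl2 *.
  rewrite (_ : K + K - (a + a) = (K - a) + (K - a)); last by lia.
  by apply: balance; lia.
case: a hl1 hl2 => [|a] hl1 hl2; first by rewrite g1.
case: (ltnP a.+2 K) => hK; last first.
  by rewrite (_ : K + K - (1 + a.+1.*2) = 1) ?g1 ?muln0 //; lia.
pose b := K - a.+3.
rewrite (_ : 1 + a.+1.*2 = a.+1 + a.+2); last by lia.
rewrite (_ : K + K - (a.+1 + a.+2) = b.+1 + b.+2); last by lia.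
rewrite -(leq_exp2r _ _ (isT : 0 < 2)) !expnMn.
apply: leq_trans (leq_mul (g_cauchy a.+1 a.+2) (g_cauchy b.+1 b.+2)) _.
rewrite -/(s a.+1) -/(s a.+2) -/(s b.+1) -/(s b.+2).
have e1 : s a.+1 * s b.+2 <= s 1 * s K.-1 by apply: balance; lia.
have e2 : s a.+2 * s b.+1 <= s 1 * s K.-1 by apply: balance; lia.
by have := leq_mul e1 e2; rewrite -mulnn; lia.
Qed.

Variable D : nat.
Hypothesis g2_le : g 2 <= D.
Hypothesis K_ge2 : 2 <= K.

Let last_ratio_dichotomy Q :
  Q * s K.-1 <= s K \/ s K.-1 <= Q ^ K.-1.
Proof.
case: (leqP (Q * s K.-1) (s K)) => h; [by left | right].
exact: (logconvex_growth (fun j _ => even_profile_pos j)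
          (fun j _ => even_profile_logconvex j) g0 (ltnW K_ge2) h).
Qed.

Lemma split_profile_bound M l : 0 < l < K + K ->
  M * (g l * g (K + K - l)) <= g (K + K) + (M * D) ^ K.
Proof.
move=> hl; have split_le := split_profile_le hl.
case: (last_ratio_dichotomy (M * D)) => h.
  apply: leq_trans (leq_addr _ _); rewrite -/(s K).
  apply: leq_trans h; rewrite -mulnA leq_mul2l; apply/orP; right.
  by apply: leq_trans split_le _; rewrite leq_mul2r g2_le orbT.
apply: leq_trans (leq_addl _ _).
apply: leq_trans (_ : M * (D * (M * D) ^ K.-1) <= _).
  by rewrite leq_mul2l; apply/orP; right; apply: leq_trans split_le _; apply: leq_mul.
by rewrite mulnA -expnS prednK // ltnW.
Qed.

Lemma colour_profile_bound N h : h ^ 2 <= K * D * s K.-1 * s K ->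
  N * h <= g (K + K) + (K * N ^ 2 * D) ^ K.
Proof.
move=> hh; set Q := K * N ^ 2 * D.
have pK1 := even_profile_pos K.-1.
case: (leqP (Q * s K.-1) (s K)) => h1.
  apply: leq_trans (leq_addr _ _); rewrite -/(s K).
  rewrite -(leq_exp2r _ _ (isT : 0 < 2)) expnMn.
  apply: leq_trans (_ : N ^ 2 * (K * D * s K.-1 * s K) <= _).
    by rewrite leq_mul2l hh orbT.
  have : Q * s K.-1 * s K <= s K * s K by rewrite leq_mul2r h1 orbT.
  by rewrite /Q -mulnn; lia.
have growth := logconvex_growth (fun j _ => even_profile_pos j)
  (fun j _ => even_profile_logconvex j) g0 (ltnW K_ge2) h1.
apply: leq_trans (leq_addl _ _).
have Q_pos : 0 < Q by move: h1; case: (Q) => //; rewrite mul0n.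
have N_pos : 0 < N ^ 2.
  by move: Q_pos; rewrite /Q; case: (N) => //; rewrite !muln0 mul0n.
have D_pos : 0 < D := leq_trans g2_pos g2_le.
have hlt : (N * h) ^ 2 < (Q * s K.-1) ^ 2.
  rewrite expnMn; apply: leq_ltn_trans (_ : _ <= N ^ 2 * (K * D * s K.-1 * s K)) _.
    by rewrite leq_mul2l hh orbT.
  rewrite (_ : (Q * s K.-1) ^ 2 = N ^ 2 * (K * D * s K.-1 * (Q * s K.-1))); last first.
    by rewrite /Q -!mulnn; lia.
  by rewrite ltn_pmul2l // ltn_pmul2l // !muln_gt0 pK1 D_pos andbT; lia.
rewrite ltn_exp2r // in hlt.
apply: leq_trans (ltnW hlt) _.
by rewrite -{2}(prednK (ltnW K_ge2)) expnS leq_mul2l growth orbT.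
Qed.
End ClosedWalkProfile.

Section TupleSums.
Variable T : finType.

Lemma sum_tuple0 (F : seq T -> nat) : \sum_(t : 0.-tuple T) F t = F [::].
Proof.
rewrite (eq_bigr (fun _ => F [::])); last by move=> t _; rewrite (tuple0 t).
by rewrite sum_nat_const card_tuple expn0 mul1n.
Qed.

Lemma sum_tupleS m (F : seq T -> nat) :
  \sum_(t : m.+1.-tuple T) F t = \sum_x \sum_(t : m.-tuple T) F (x :: t).
Proof.
rewrite pair_big /=.
rewrite (reindex (fun p : T * m.-tuple T => [tuple of p.1 :: p.2])) /=; last first.
  exists (fun t : m.+1.-tuple T => (thead t, [tuple of behead t])).
    by move=> [x t] _ /=; congr pair; apply: val_inj.
  by move=> t _; rewrite [t in RHS]tuple_eta.
by apply: eq_bigr => [[x t]].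
Qed.

Lemma sum_tuple_cat p q m (F : seq T -> nat) : p + q = m ->
  \sum_(t : m.-tuple T) F t =
  \sum_(u : p.-tuple T) \sum_(v : q.-tuple T) F (u ++ v).
Proof.
move=> <-; elim: p F => [|p IH] F.
  by rewrite (sum_tuple0 (fun u => \sum_(v : q.-tuple T) F (u ++ v))).
rewrite (sum_tupleS (p + q) F).
rewrite (sum_tupleS p (fun u => \sum_(v : q.-tuple T) F (u ++ v))).
by apply: eq_bigr => x _; exact: (IH (fun s => F (x :: s))).
Qed.

Lemma sum_tuple_rot m r (F : seq T -> nat) :
  \sum_(t : m.-tuple T) F (rot r t) = \sum_(t : m.-tuple T) F t.
Proof.
rewrite (reindex (fun t : m.-tuple T => [tuple of rotr r t])) /=; last first.
  exists (fun t : m.-tuple T => [tuple of rot r t]).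
    by move=> t _; apply: val_inj; rewrite /= rotrK.
  by move=> t _; apply: val_inj; rewrite /= rotK.
by apply: eq_bigr => t _; rewrite rotrK.
Qed.
End TupleSums.

Section Walks.
Variables (T : finType) (e : rel T).

Fixpoint walks m x y : nat :=
  if m is m'.+1 then \sum_z e x z * walks m' z y else (x == y : nat).

Lemma walksS m x y : walks m.+1 x y = \sum_z e x z * walks m z y.
Proof. by []. Qed.

Lemma sum_eq_pick (F : T -> nat) x : \sum_z (x == z) * F z = F x.
Proof.
rewrite (bigD1 x) //= eqxx mul1n big1 ?addn0 // => z hz.
by rewrite eq_sym (negbTE hz).
Qed.

Lemma walks_add p q x y : walks (p + q) x y = \sum_z walks p x z * walks q z y.
Proof.
elim: p x => [|p IH] x; first by rewrite add0n sum_eq_pick.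
rewrite addSn walksS.
under eq_bigr => z _ do rewrite IH big_distrr /=.
rewrite exchange_big /=; apply: eq_bigr => w _.
by rewrite big_distrl /=; apply: eq_bigr => z _; rewrite mulnA.
Qed.

Lemma walks1 x y : walks 1 x y = e x y.
Proof.
rewrite walksS; under eq_bigr => z _ do rewrite /= mulnC eq_sym.
exact: (sum_eq_pick (e x)).
Qed.

Lemma walks_tuple m x y :
  \sum_(t : m.-tuple T) (path e x t && (last x t == y)) = walks m x y.
Proof.
elim: m x => [|m IH] x.
  by rewrite (sum_tuple0 (fun t => path e x t && (last x t == y))).
rewrite (sum_tupleS m (fun t => path e x t && (last x t == y))) walksS.
apply: eq_bigr => z _; rewrite -IH big_distrr /=; apply: eq_bigr => t _.
by rewrite /= -andbA mulnb.
Qed.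

Definition degree x := #|[set y | e x y]|.

Lemma degree_sum x : degree x = \sum_y (e x y : nat).
Proof.
rewrite /degree cardsE -sum1_card big_mkcond /=; apply: eq_bigr => y _.
by rewrite unfold_in /=; case: (e x y).
Qed.

Lemma degree_le x : degree x <= max_degree e.
Proof. exact: (@leq_bigmax T (fun x => #|[set y | e x y]|) x). Qed.

Lemma walks_isolated m x y : degree x = 0 -> walks m.+1 x y = 0.
Proof.
rewrite degree_sum => /eqP; rewrite sum_nat_eq0 => /forallP deg0.
by rewrite walksS big1 // => z _; rewrite (eqP (deg0 z)).
Qed.

Hypothesis e_sym : symmetric e.

Lemma walks_sym m x y : walks m x y = walks m y x.
Proof.
elim: m x y => [|m IH] x y; first by rewrite /= eq_sym.
rewrite walksS -addn1 walks_add; apply: eq_bigr => z _.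
by rewrite IH walks1 mulnC e_sym.
Qed.

Lemma walks2 x : walks 2 x x = degree x.
Proof.
rewrite degree_sum walksS; apply: eq_bigr => y _.
by rewrite walks1 e_sym; case: (e y x).
Qed.

Lemma walks_cauchy x p q :
  walks (p + q) x x ^ 2 <= walks (p + p) x x * walks (q + q) x x.
Proof.
rewrite !walks_add.
have -> : \sum_z walks p x z * walks p z x = \sum_z walks p x z ^ 2.
  by apply: eq_bigr => z _; rewrite (walks_sym p z x) mulnn.
have -> : \sum_z walks q x z * walks q z x = \sum_z walks q z x ^ 2.
  by apply: eq_bigr => z _; rewrite (walks_sym q x z) mulnn.
exact: cauchy_schwarz_nat.
Qed.
End Walks.

Section Cycles.
Variables (T : finType) (e : rel T).

Lemma cycle_tnth m (t : m.-tuple T) :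
  cycle e t = [forall i : 'I_m, e (tnth t i) (tnth t (ordS i))].
Proof.
case: m t => [|m] t.
  by rewrite (tuple0 t) /=; apply/esym/forallP => -[i hi].
have x0 : T := tnth t ord0.
have Hs : size t = m.+1 by rewrite size_tuple.
rewrite (cycle_path x0); apply/(pathP x0)/forallP => [H i|H j hj].
  rewrite !(tnth_nth x0) /=.
  case: (ltnP i.+1 m.+1) => hi.
    by rewrite modn_small //; have := H i.+1; rewrite Hs => /(_ hi).
  have -> : i = m :> nat by move: (ltn_ord i) hi; lia.
  rewrite modnn; have := H 0; rewrite Hs => /(_ isT) /=.
  by rewrite -(nth_last x0) Hs.
case: j hj => [|j] hj /=.
  have := H ord_max; rewrite !(tnth_nth x0) /= modnn.
  by rewrite -(nth_last x0) Hs.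
rewrite Hs in hj.
by have := H (Ordinal (ltnW hj)); rewrite !(tnth_nth x0) /= modn_small.
Qed.

Lemma hom_cycle_tuple m : hom_cycle e m = \sum_(t : m.-tuple T) cycle e t.
Proof.
rewrite /hom_cycle -sum1_card big_mkcond.
rewrite (reindex (fun t : m.-tuple T => [ffun i => tnth t i])); last first.
  exists (fun f : {ffun 'I_m -> T} => [tuple f i | i < m]).
    by move=> t _; apply: eq_from_tnth => i; rewrite tnth_mktuple ffunE.
  by move=> f _; apply/ffunP => i; rewrite ffunE tnth_mktuple.
apply: eq_bigr => t _; rewrite inE cycle_tnth.
rewrite (eq_forallb (fun i => congr2 e (ffunE _ i) (ffunE _ (ordS i)))).
by case: [forall _, _].
Qed.

Lemma hom_cycle_walks m : 0 < m -> hom_cycle e m = \sum_x walks e m x x.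
Proof.
move=> hm; rewrite hom_cycle_tuple.
under [RHS]eq_bigr => x _ do rewrite -walks_tuple.
rewrite exchange_big /=; apply: eq_bigr => t _.
case: t => -[|y s] hs; first by move: hs; rewrite /= => /eqP hs; rewrite -hs in hm.
have -> : cycle e (Tuple hs) = path e (last y s) (y :: s) by exact: cycle_path.
rewrite (bigD1 (last y s)) //= eqxx andbT big1 ?addn0 // => x hx.
by rewrite eq_sym (negbTE hx) andbF.
Qed.
End Cycles.

(* Colour repetitions.  Colours live in an arbitrary type, so their equality
   is decided classically. *)
Definition same_colour (C : Type) (a b : C) : bool :=
  if excluded_middle_informative (a = b) then true else false.

Lemma same_colourP (C : Type) (a b : C) : reflect (a = b) (same_colour a b).
Proof. by rewrite /same_colour; case: excluded_middle_informative => h; constructor. Qed.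

Lemma exists_le_count (I : finType) (P : pred I) :
  ([exists i, P i] : nat) <= \sum_i (P i : nat).
Proof.
case: (boolP [exists i, P i]) => // /existsP [i Pi].
by rewrite (bigD1 i) //= Pi.
Qed.

Section ColourWalks.
Variables (T : finType) (e : rel T) (C : Type) (c : T -> T -> C).
Hypothesis e_sym : symmetric e.
Hypothesis c_sym : forall x y, e x y -> c x y = c y x.
Hypothesis c_proper : forall x y z, e x y -> e x z -> y <> z -> c x y <> c x z.

Definition colour_in_prefix K (g : C) (a : T) (v : seq T) : bool :=
  [exists d : 'I_K, same_colour (c (nth a (a :: v) d) (nth a v d)) g].

Definition colour_walks K a' a z :=
  \sum_(v : K.-tuple T)
    [&& path e a v, last a v == z & colour_in_prefix K (c a' a) a v].

(* Closed walks z ~> a' -> a ~> z of length 2K whose edge a'a has its colour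
   repeated on the final K-walk from a to z. *)
Definition colour_weight K z :=
  \sum_a \sum_a' e a' a * walks e K.-1 z a' * colour_walks K a' a z.

Lemma colour_walks_le K a' a z : colour_walks K a' a z <= walks e K a z.
Proof.
rewrite -walks_tuple; apply: leq_sum => v _.
by case: (path e a v); case: (last a v == z); case: colour_in_prefix.
Qed.

Lemma proper_colour_unique a g : \sum_a' (e a' a && same_colour g (c a' a) : nat) <= 1.
Proof.
case: (pickP (fun a' => e a' a && same_colour g (c a' a))) => [a1 Pa1 | none]; last first.
  by rewrite big1 // => a' _; rewrite none.
rewrite (bigD1 a1) //= Pa1 big1 // => a2 ne.
case E: (e a2 a && same_colour g (c a2 a)) => //; exfalso.
move/andP: E => [e2 /same_colourP s2].
move/andP: Pa1 => [e1 /same_colourP s1].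
apply: (c_proper (x:=a) (y:=a1) (z:=a2)); rewrite 1?e_sym //.
  by move=> h; rewrite h eqxx in ne.
by rewrite -(c_sym e1) -s1 s2 (c_sym e2).
Qed.

Lemma colour_choices_le K v a :
  \sum_a' e a' a * colour_in_prefix K (c a' a) a v <= K.
Proof.
apply: leq_trans (_ : \sum_a' \sum_(d : 'I_K)
   (e a' a && same_colour (c (nth a (a :: v) d) (nth a v d)) (c a' a) : nat) <= _).
  apply: leq_sum => a' _; case: (e a' a); rewrite ?mul0n // mul1n.
  by apply: leq_trans (exists_le_count _) _; apply: leq_sum.
rewrite exchange_big /=.
apply: leq_trans (_ : \sum_(d : 'I_K) 1 <= _); last by rewrite sum1_card card_ord.
by apply: leq_sum => d _; apply: proper_colour_unique.
Qed.

Lemma colour_walks_sum K a z : \sum_a' e a' a * colour_walks K a' a z <= K * walks e K a z.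
Proof.
rewrite -walks_tuple big_distrr /=.
under eq_bigr => a' _ do rewrite /colour_walks big_distrr /=.
rewrite exchange_big /=; apply: leq_sum => v _.
case: (path e a v); case: (last a v == z) => /=;
  try by rewrite big1 // => a' _; rewrite muln0.
by rewrite muln1; exact: colour_choices_le.
Qed.

Lemma colour_weight_sq K z :
  colour_weight K z ^ 2 <=
  K * max_degree e * walks e (K.-1 + K.-1) z z * walks e (K + K) z z.
Proof.
rewrite /colour_weight pair_bigA /=.
rewrite (eq_bigr (fun p : T * T =>
   (e p.2 p.1 * walks e K.-1 z p.2) * (e p.2 p.1 * colour_walks K p.2 p.1 z))); last first.
  by move=> p _; case: (e p.2 p.1); rewrite ?mul0n ?mul1n.
apply: leq_trans (cauchy_schwarz_nat _ _) _.
have walk_part : \sum_(p : T * T) (e p.2 p.1 * walks e K.-1 z p.2) ^ 2 <=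
    max_degree e * walks e (K.-1 + K.-1) z z.
  rewrite -(pair_bigA _ (fun a a' => (e a' a * walks e K.-1 z a') ^ 2)) /=.
  rewrite exchange_big walks_add big_distrr /=; apply: leq_sum => a' _.
  rewrite (walks_sym e_sym _ a' z) mulnn.
  apply: leq_trans (_ : \sum_a (e a' a : nat) * walks e K.-1 z a' ^ 2 <= _).
    by apply: leq_sum => a _; rewrite expnMn; case: (e a' a).
  by rewrite -big_distrl /= leq_mul2r -degree_sum degree_le orbT.
have colour_part : \sum_(p : T * T) (e p.2 p.1 * colour_walks K p.2 p.1 z) ^ 2 <=
    K * walks e (K + K) z z.
  rewrite -(pair_bigA _ (fun a a' => (e a' a * colour_walks K a' a z) ^ 2)) /=.
  rewrite walks_add big_distrr /=; apply: leq_sum => a _.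
  rewrite (walks_sym e_sym _ z a).
  apply: leq_trans (_ : \sum_a' walks e K a z * (e a' a * colour_walks K a' a z) <= _).
    apply: leq_sum => a' _; rewrite -mulnn leq_mul2r; apply/orP; right.
    by case: (e a' a); rewrite ?mul0n ?mul1n // colour_walks_le.
  by rewrite -big_distrr /= mulnCA leq_mul2l colour_walks_sum orbT.
by apply: leq_trans (leq_mul walk_part colour_part) _; apply: eq_leq; lia.
Qed.
End ColourWalks.

(* Closed walks, encoded as m-tuples t read cyclically (the walk starts and
   ends at last t), which are "bad" in one of the two ways that prevent them
   from being rainbow cycles, and the number of such walks. *)
Section BadWalks.
Variables (T : finType) (e : rel T) (C : Type) (c : T -> T -> C) (x0 : T).

Definition returns_at l (s : seq T) : bool := nth x0 s l.-1 == last x0 s.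

Definition repeats_colour K (s : seq T) : bool :=
  [exists d : 'I_K, same_colour (c (nth x0 s (K.-1 + d)) (nth x0 s (K + d)))
                                (c (nth x0 s K.-2) (nth x0 s K.-1))].

Lemma last_nonempty (u : seq T) x y : 0 < size u -> last x u = last y u.
Proof. by case: u. Qed.

(* A closed m-walk returning after l steps splits into closed walks of
   lengths l and m - l at the same vertex. *)
Lemma returns_count m l : 0 < l < m ->
  \sum_(t : m.-tuple T) cycle e t * returns_at l t <=
  \sum_x walks e l x x * walks e (m - l) x x.
Proof.
move=> /andP [hl hlm].
rewrite (@sum_tuple_cat _ l (m - l) m (fun s => cycle e s * returns_at l s)); last by lia.
apply: leq_trans (_ : _ <= \sum_(u : l.-tuple T) \sum_(v : (m - l).-tuple T) \sum_x
   (path e x u && (last x u == x)) * (path e x v && (last x v == x))) _; last first.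
  apply: eq_leq; rewrite pair_bigA /= exchange_big /=; apply: eq_bigr => x _.
  rewrite -(pair_bigA _ (fun (u : l.-tuple T) (v : (m - l).-tuple T) =>
     (path e x u && (last x u == x)) * (path e x v && (last x v == x)))) /=.
  by rewrite -!walks_tuple big_distrl /=; apply: eq_bigr => u _; rewrite big_distrr.
apply: leq_sum => u _; apply: leq_sum => v _.
set x := last x0 (u ++ v).
rewrite (bigD1 x) //= (leq_trans _ (leq_addr _ _)) //.
have su : size u = l by rewrite size_tuple.
have hu : 0 < size u by rewrite su.
rewrite /returns_at nth_cat su (_ : l.-1 < l); last by rewrite prednK.
rewrite (_ : nth x0 u l.-1 = last x0 u); last by rewrite -(nth_last x0) su.
case E: (last x0 u == x); last by rewrite muln0.
rewrite muln1 (cycle_path x0) -/x cat_path.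
move/eqP: E => E.
rewrite (last_nonempty x x0 hu) E eqxx andbT.
have -> : last x v = x by rewrite [in RHS]/x last_cat E.
by rewrite eqxx andbT; case: (path e x u); case: (path e x v).
Qed.

Lemma sum_exchange4 (I J K L : finType) (F : I -> J -> K -> L -> nat) :
  \sum_i \sum_j \sum_k \sum_l F i j k l = \sum_k \sum_l \sum_i \sum_j F i j k l.
Proof.
rewrite (eq_bigr (fun i => \sum_k \sum_j \sum_l F i j k l)); last first.
  by move=> i _; exact: exchange_big.
rewrite exchange_big /=; apply: eq_bigr => k _.
rewrite (eq_bigr (fun i => \sum_l \sum_j F i j k l)); last first.
  by move=> i _; exact: exchange_big.
exact: exchange_big.
Qed.

Lemma repeats_colour_split K (u : K.-1.-tuple T) a (v : K.-tuple T) :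
  2 <= K ->
  repeats_colour K (u ++ a :: v) = colour_in_prefix c K (c (last x0 u) a) a v.
Proof.
move=> K2; have su : size u = K.-1 by rewrite size_tuple.
have sv : size v = K by rewrite size_tuple.
rewrite /repeats_colour /colour_in_prefix; apply: eq_existsb => d.
rewrite !nth_cat su.
rewrite (_ : (K.-1 + d < K.-1) = false); last by lia.
rewrite (_ : (K + d < K.-1) = false); last by lia.
rewrite (_ : (K.-2 < K.-1) = true); last by lia.
rewrite (_ : (K.-1 < K.-1) = false); last by lia.
rewrite (_ : K.-1 + d - K.-1 = d); last by lia.
rewrite (_ : K + d - K.-1 = d.+1); last by lia.
rewrite subnn /= (_ : nth x0 u K.-2 = last x0 u); last first.
  by rewrite -(nth_last x0) su; congr nth; lia.
have hd : d < size v by rewrite sv.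
have hd' : d < size (a :: v) by rewrite /= sv ltnS ltnW.
by rewrite (set_nth_default a x0 hd) (set_nth_default a x0 hd').
Qed.

Lemma repeats_colour_count K : 2 <= K ->
  \sum_(t : (K + K).-tuple T) cycle e t * repeats_colour K t <= \sum_z colour_weight e c K z.
Proof.
move=> K2.
rewrite (@sum_tuple_cat _ K.-1 K.+1 (K + K) (fun s => cycle e s * repeats_colour K s));
  last by lia.
rewrite (eq_bigr (fun u : K.-1.-tuple T => \sum_a \sum_(v : K.-tuple T)
   cycle e (u ++ a :: v) * repeats_colour K (u ++ a :: v))); last first.
  by move=> u _; rewrite (sum_tupleS K (fun w => cycle e (u ++ w) * repeats_colour K (u ++ w))).
pose H (u : K.-1.-tuple T) (v : K.-tuple T) (z a' a : T) :=
  e a' a * (path e z u && (last z u == a')) *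
  [&& path e a v, last a v == z & colour_in_prefix c K (c a' a) a v].
apply: leq_trans (_ : _ <= \sum_a \sum_z \sum_a' \sum_u \sum_v H u v z a' a) _.
  rewrite exchange_big /=; apply: leq_sum => a _.
  rewrite -(sum_exchange4 (fun u v z a' => H u v z a' a)).
  apply: leq_sum => u _; apply: leq_sum => v _.
  have hu : 0 < size u by rewrite size_tuple; lia.
  set z := last a v; set a' := last x0 u.
  apply: leq_trans (_ : H u v z a' a <= _); last first.
    by rewrite (bigD1 z) //= (bigD1 a') //= -addnA leq_addr.
  rewrite /H repeats_colour_split // (cycle_path x0) last_cat /= -/z cat_path /=.
  rewrite (last_nonempty z x0 hu) -/a' !eqxx andbT.
  by case: (path e z u); case: (e a' a); case: (path e a v); case: colour_in_prefix.
rewrite exchange_big /=; apply: eq_leq; apply: eq_bigr => z _.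
rewrite /colour_weight; apply: eq_bigr => a _; apply: eq_bigr => a' _.
rewrite /colour_walks -walks_tuple (big_distrr (e a' a : nat)) big_distrl /=.
by apply: eq_bigr => u _; rewrite big_distrr.
Qed.
End BadWalks.

Section Rotations.
Variables (T : finType) (C : Type) (c : T -> T -> C) (x0 : T).

Lemma nth_rot (s : seq T) r p : r <= size s -> p < size s ->
  nth x0 (rot r s) p = nth x0 s (if p + r < size s then p + r else p + r - size s).
Proof.
move=> hr hp; rewrite /rot nth_cat size_drop.
case: ltnP => h1.
  by rewrite nth_drop; case: ltnP => h2; [congr nth; lia | lia].
rewrite nth_take; last by lia.
by case: ltnP => h2; [lia | congr nth; lia].
Qed.

Lemma ordS_val m (i : 'I_m) : val (ordS i) = if i.+1 < m then i.+1 else 0.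
Proof.
rewrite /=; case: ltnP => h; first by rewrite modn_small.
by rewrite (_ : i.+1 = m) ?modnn //; move: (ltn_ord i) h; lia.
Qed.

(* A repeated vertex t_i = t_j, i < j: rotate so that t_j comes last; the
   walk then returns to its start after some 0 < l < m steps. *)
Lemma repeated_vertex_rotation m (t : m.-tuple T) (i j : 'I_m) :
  i < j -> tnth t i = tnth t j ->
  exists r : 'I_m, exists l : 'I_m, (0 < l) && returns_at x0 l (rot r t).
Proof.
move=> hij; rewrite !(tnth_nth x0) => E.
have st : size t = m by rewrite size_tuple.
have hj := ltn_ord j.
case: (ltnP j.+1 m) => hjm.
  exists (Ordinal hjm).
  have hl : m - j + i < m by lia.
  exists (Ordinal hl) => /=.
  apply/andP; split; first lia.
  rewrite /returns_at -(nth_last x0) size_rot st !nth_rot ?st; try lia.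
  case: ltnP => h1; first lia.
  case: ltnP => h2; first lia.
  rewrite (_ : (m - j + i).-1 + j.+1 - m = i); last by lia.
  by rewrite (_ : m.-1 + j.+1 - m = j) ?E //; lia.
have h0 : 0 < m by lia.
exists (Ordinal h0).
have hl : i.+1 < m by lia.
exists (Ordinal hl) => /=.
by rewrite /returns_at rot0 -(nth_last x0) st /= (_ : m.-1 = j) ?E //; lia.
Qed.

Variable K : nat.
Hypothesis K_ge2 : 2 <= K.
Local Notation m := (K + K).

(* A repeated colour on edges i and j at cyclic distance at most K from i to
   j: rotate so that edge i becomes the edge t_(K-2) t_(K-1). *)
Lemma repeated_colour_rotation (t : m.-tuple T) (i j : 'I_m) :
  (i < j /\ j - i <= K) \/ (j < i /\ j + m - i <= K) ->
  c (tnth t i) (tnth t (ordS i)) = c (tnth t j) (tnth t (ordS j)) ->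
  exists r : 'I_m, repeats_colour c x0 K (rot r t).
Proof.
move=> hd; rewrite !(tnth_nth x0) !ordS_val => E.
have st : size t = m by rewrite size_tuple.
have hi := ltn_ord i; have hj := ltn_ord j.
set qi := (if i.+1 < m then i.+1 else 0) in E.
have Hqi : (qi = i.+1 \/ (qi = 0 /\ i.+1 = m)) /\ qi < m by rewrite /qi; case: ltnP; lia.
set qj := (if j.+1 < m then j.+1 else 0) in E.
have Hqj : (qj = j.+1 \/ (qj = 0 /\ j.+1 = m)) /\ qj < m by rewrite /qj; case: ltnP; lia.
clearbody qi qj.
have [r [hr Hr]] : exists r, r < m /\ (K.-2 + r = i \/ K.-2 + r = i + m).
  by case: (leqP K.-2 i) => h; [exists (i - K.-2) | exists (i + m - K.-2)]; lia.
exists (Ordinal hr).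
have [d [hdK Hd]] : exists d, d < K /\ (i + d.+1 = j \/ i + d.+1 = j + m).
  by case: hd => -[h1 h2]; [exists (j - i).-1 | exists (j + m - i).-1]; lia.
apply/existsP; exists (Ordinal hdK); apply/same_colourP => /=.
have wrap p q : p < m + m -> (p = q \/ p = q + m) -> q < m ->
   nth x0 t (if p < m then p else p - m) = nth x0 t q.
  by move=> h1 h2 h3; case: ltnP => h4; congr nth; lia.
rewrite !nth_rot ?st; try lia.
rewrite (wrap _ j); try lia.
rewrite (wrap _ qj); try lia.
rewrite (wrap _ i); try lia.
rewrite (wrap _ qi); try lia.
by rewrite E.
Qed.
End Rotations.

Lemma not_injective (A B : Type) (f : A -> B) :
  ~ injective f -> exists x y, f x = f y /\ x <> y.
Proof.
move=> ninj; apply: NNPP => none; apply: ninj => x y fxy.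
by apply: NNPP => nxy; apply: none; exists x, y.
Qed.

Lemma rotation_average (T : finType) (e : rel T) m (F : seq T -> nat) :
  \sum_(t : m.-tuple T) cycle e t * \sum_(r : 'I_m) F (rot r t) =
  m * \sum_(t : m.-tuple T) cycle e t * F t.
Proof.
under eq_bigr => t _ do rewrite big_distrr.
rewrite exchange_big /=.
transitivity (\sum_(r : 'I_m) \sum_(t : m.-tuple T) cycle e t * F t);
  last by rewrite sum_nat_const card_ord.
apply: eq_bigr => r _; apply: etrans (sum_tuple_rot m r (fun s => cycle e s * F s)).
by apply: eq_bigr => t _; rewrite rot_cycle.
Qed.

Section NonRainbowWalks.
Variables (T : finType) (e : rel T) (C : Type) (c : T -> T -> C) (x0 : T) (K : nat).
Hypothesis K_ge2 : 2 <= K.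
Local Notation m := (K + K).

Definition bad_count (s : seq T) : nat :=
  \sum_(l : 'I_m | 0 < l) returns_at x0 l s + repeats_colour c x0 K s.

(* If G has no rainbow 2K-cycle, every closed 2K-walk has a bad rotation:
   it repeats a vertex or a colour, and a repeated colour occurs at cyclic
   distance at most K in one of the two directions. *)
Lemma non_rainbow_bad_rotation (t : m.-tuple T) :
  cycle e t -> ~ has_rainbow_cycle e c m ->
  exists r : 'I_m, 0 < bad_count (rot r t).
Proof.
move=> ct norb; pose f i := tnth t i.
have adj : forall i, e (f i) (f (ordS i)) by move: ct; rewrite cycle_tnth => /forallP.
case: (classic (injective f)) => [finj | ninj].
  have [i [j [E hne]]] : exists i j,
      c (f i) (f (ordS i)) = c (f j) (f (ordS j)) /\ i <> j.
    by apply: not_injective => cinj; apply: norb; exists f; split => //; split.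
  suff [r hr] : exists r : 'I_m, repeats_colour c x0 K (rot r t).
    by exists r; rewrite /bad_count hr addn1.
  have hij : (i : nat) <> j by move=> h; apply: hne; apply: val_inj.
  have hi := ltn_ord i; have hj := ltn_ord j.
  case: (leqP (if i < j then j - i else j + m - i) K) => hd.
    apply: (repeated_colour_rotation x0 K_ge2 (i := i) (j := j)) E.
    by move: hd; case: (ltnP i j) => h hd; lia.
  apply: (repeated_colour_rotation x0 K_ge2 (i := j) (j := i)) (esym E).
  by move: hd; case: (ltnP i j) => h hd; lia.
have [i [j [E hne]]] := not_injective ninj.
suff [r [l /andP [hl hr]]] :
    exists r l : 'I_m, (0 < l) && returns_at x0 l (rot r t).
  by exists r; rewrite /bad_count (bigD1 l) //= hr -addnA.
have hij : (i : nat) <> j by move=> h; apply: hne; apply: val_inj.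
rewrite /f /= in E; case: (ltnP i j) => h.
  exact: (repeated_vertex_rotation x0 h E).
have h' : j < i by lia.
exact: (repeated_vertex_rotation x0 h' (esym E)).
Qed.

Lemma hom_le_bad :
  ~ has_rainbow_cycle e c m ->
  hom_cycle e m <=
  m * (\sum_(l : 'I_m | 0 < l) \sum_x walks e l x x * walks e (m - l) x x
       + \sum_z colour_weight e c K z).
Proof.
move=> norb; rewrite hom_cycle_tuple.
apply: leq_trans (_ : _ <= \sum_(t : m.-tuple T) cycle e t *
    \sum_(r : 'I_m) bad_count (rot r t)) _.
  apply: leq_sum => t _; case ct: (cycle e t) => //; rewrite mul1n.
  have [r hr] := non_rainbow_bad_rotation ct norb.
  by rewrite (bigD1 r) //= (leq_trans hr (leq_addr _ _)).
rewrite rotation_average leq_mul2l; apply/orP; right.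
rewrite /bad_count (eq_bigr _ (fun t _ => mulnDr _ _ _)) big_split /=.
apply: leq_add; last exact: repeats_colour_count.
rewrite (eq_bigr _ (fun t _ => big_distrr _ _ _)) exchange_big /=.
by apply: leq_sum => l hl; apply: returns_count; rewrite hl ltn_ord.
Qed.
End NonRainbowWalks.

Section VertexSums.
Variables (T : finType) (e : rel T) (C : Type) (c : T -> T -> C) (K : nat).
Hypothesis e_irr : irreflexive e.
Hypothesis e_sym : symmetric e.
Hypothesis c_sym : forall x y, e x y -> c x y = c y x.
Hypothesis c_proper : forall x y z, e x y -> e x z -> y <> z -> c x y <> c x z.
Hypothesis K_ge2 : 2 <= K.
Local Notation m := (K + K).
Local Notation D := (max_degree e).

Let m_pos : 0 < m. Proof. by rewrite addn_gt0 ltnW. Qed.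
Let walks0 x : walks e 0 x x = 1. Proof. by rewrite /= eqxx. Qed.
Let walks1_loop x : walks e 1 x x = 0. Proof. by rewrite walks1 e_irr. Qed.
Let walks2_le x : walks e 2 x x <= D. Proof. by rewrite walks2 // degree_le. Qed.

Lemma returns_pointwise M x l : 0 < l < m ->
  M * (walks e l x x * walks e (m - l) x x) <= walks e m x x + (M * D) ^ K.
Proof.
move=> hl; case: (posnP (degree e x)) => hdeg.
  by case/andP: hl => l_pos _; rewrite -(prednK l_pos) walks_isolated // mul0n muln0.
have W2_pos : 0 < walks e 2 x x by rewrite walks2.
exact: (@split_profile_bound (fun l => walks e l x x) K (walks0 x) (walks1_loop x)
          (walks_cauchy e_sym x) W2_pos D (walks2_le x) K_ge2 M l hl).
Qed.

Lemma colour_pointwise N z :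
  N * colour_weight e c K z <= walks e m z z + (K * N ^ 2 * D) ^ K.
Proof.
case: (posnP (degree e z)) => hdeg.
  rewrite /colour_weight big1 ?muln0 // => a _; rewrite big1 // => a' _.
  by case: (K) K_ge2 => [|[|k]] // _; rewrite walks_isolated // muln0 mul0n.
have W2_pos : 0 < walks e 2 z z by rewrite walks2.
exact: (@colour_profile_bound (fun l => walks e l z z) K (walks0 z) (walks1_loop z)
          (walks_cauchy e_sym z) W2_pos D (walks2_le z) K_ge2 N _
          (colour_weight_sq e_sym c_sym c_proper K z)).
Qed.

Lemma returns_bound :
  4 * (m * \sum_(l : 'I_m | 0 < l) \sum_x walks e l x x * walks e (m - l) x x)
  <= hom_cycle e m + #|T| * (4 * m ^ 2 * D) ^ K.
Proof.
set V := \sum_(l : 'I_m | 0 < l) _.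
rewrite -(@leq_pmul2l m) // (_ : m * (4 * (m * V)) = 4 * m ^ 2 * V); last by lia.
set bound := hom_cycle e m + #|T| * (4 * m ^ 2 * D) ^ K.
apply: leq_trans (_ : _ <= \sum_(l : 'I_m | 0 < l) bound) _.
  rewrite /V big_distrr; apply: leq_sum => l hl.
  rewrite big_distrr /bound (hom_cycle_walks e m_pos) -sum_nat_const -big_split.
  by apply: leq_sum => x _; apply: returns_pointwise; rewrite hl ltn_ord.
apply: leq_trans (_ : _ <= \sum_(l : 'I_m) bound) _.
  by rewrite big_mkcond; apply: leq_sum => l _; case: ifP.
by rewrite sum_nat_const card_ord.
Qed.

Lemma colour_bound :
  4 * (m * \sum_z colour_weight e c K z) <= hom_cycle e m + #|T| * (K * (4 * m) ^ 2 * D) ^ K.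
Proof.
rewrite mulnA big_distrr (hom_cycle_walks e m_pos) -sum_nat_const -big_split.
by apply: leq_sum => z _; exact: colour_pointwise.
Qed.
End VertexSums.

Lemma colour_error_term K D :
  (K * (4 * (K + K)) ^ 2 * D) ^ K = 64 ^ K * K ^ (3 * K) * D ^ K.
Proof.
rewrite (_ : K * (4 * (K + K)) ^ 2 * D = 64 * K ^ 3 * D); last by lia.
by rewrite expnM !expnMn.
Qed.

(* If the bad walks, each of which is at most a quarter of hom plus an
   error, make up all of hom, then hom is at most the larger error. *)
Lemma half_absorption hom a b P Q :
  hom <= a + b -> 4 * a <= hom + P -> 4 * b <= hom + Q -> P <= Q -> hom <= Q.
Proof. lia. Qed.

Theorem lemma4p1 (k : nat) (T : finType) (e : rel T) (C : Type)
    (c : T -> T -> C) :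
  2 <= k -> simple_graph e -> proper_edge_colouring e c ->
  hom_cycle e (2 * k) > 64 ^ (2 * k) * k ^ (3 * k) * #|T| * max_degree e ^ k ->
  has_rainbow_cycle e c (2 * k).
Proof.
move=> k_ge2 [e_irr e_sym] [c_sym c_proper].
rewrite mul2n -addnn => hom_large; apply: NNPP => no_rainbow.
have m_pos : 0 < k + k by rewrite addn_gt0 ltnW.
have [x0 _] : exists x0 : T, true.
  move: (leq_ltn_trans (leq0n _) hom_large); rewrite hom_cycle_walks //.
  by rewrite lt0n sum_nat_eq0 negb_forall => /existsP [x _]; exists x.
have bad := hom_le_bad x0 k_ge2 no_rainbow.
have returns := returns_bound e_irr e_sym k_ge2.
have colours := colour_bound e_irr e_sym c_sym c_proper k_ge2.
set D := max_degree e in hom_large returns colours.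
rewrite mulnDr in bad.
have errors_le : #|T| * (4 * (k + k) ^ 2 * D) ^ k <= #|T| * (k * (4 * (k + k)) ^ 2 * D) ^ k.
  by rewrite leq_mul2l leq_exp2r ?leq_mul2r ?(ltnW k_ge2) //; apply/orP; right; nia.
have := half_absorption bad returns colours errors_le.
rewrite colour_error_term => hom_le.
have pow_le : 64 ^ k <= 64 ^ (k + k) by rewrite leq_pexp2l // leq_addr.
have error_le : #|T| * (64 ^ k * k ^ (3 * k) * D ^ k) <=
                64 ^ (k + k) * k ^ (3 * k) * #|T| * D ^ k.
  rewrite [X in _ <= X](_ : _ = #|T| * (64 ^ (k + k) * k ^ (3 * k) * D ^ k)); last by lia.
  by rewrite leq_mul2l !leq_mul2r pow_le !orbT.
by move: hom_large; rewrite ltnNge (leq_trans hom_le error_le).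
Qed.
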